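(* Let $X$ be an exponential vector space over a field $K$, and let $A$ and $B$ be two bases of $X\smallsetminus X_0$. Then for every $a\in A$ there exists exactly one $b_a\in B$ such that $L(a)=L(b_a)$.
   Context: An exponential vector space (evs) over a field $K$ is a partially ordered set $(X,\leq)$ with a binary operation $+$ on $X$ and a map $K\times X\to X$, $(\alpha,x)\mapsto \alpha x$, such that: (A1) $(X,+)$ is a commutative semigroup with identity $\theta$; (A2) $x\leq y$ implies $x+z\leq y+z$ and $\alpha x\leq \alpha y$ for all $z\in X$, $\alpha\in K$; (A3) $\alpha(x+y)=\alpha x+\alpha y$, $\alpha(\beta x)=(\alpha\beta)x$, $(\alpha+\beta)x\leq \alpha x+\beta x$, $1x=x$; (A4) $\alpha x=\theta$ iff $\alpha=0$ or $x=\theta$; (A5) $x+(-1)x=\theta$ iff $x\in X_0$, where $X_0:=\{z\in X: y\not\leq z \text{ for all } y\in X\smallsetminus\{z\}\}$ (the set of minimal elements, called the primitive space; it is a vector space over $K$); (A6) for each $x\in X$ there is $p\in X_0$ with $p\leq x$. For $x\in X\smallsetminus X_0$ let $L(x):=\{z\in X: z\geq \alpha x+p \text{ for some } \alpha\in K\smallsetminus\{0\},\ p\in X_0\}$. A subset $B\subseteq X\smallsetminus X_0$ generates $X\smallsetminus X_0$ if $X\smallsetminus X_0=\bigcup_{b\in B}L(b)$. Elements $x,y\in X\smallsetminus X_0$ are orderly dependent if $x\in L(y)$ or $y\in L(x)$, and orderly independent otherwise; $B\subseteq X\smallsetminus X_0$ is orderly independent if any two distinct members of $B$ are orderly independent.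 A basis of $X\smallsetminus X_0$ is an orderly independent subset of $X\smallsetminus X_0$ that generates $X\smallsetminus X_0$. *)

From mathcomp Require Import all_boot all_algebra.
Set Implicit Arguments. Unset Strict Implicit. Unset Printing Implicit Defensive.
Import GRing.Theory.
Local Open Scope ring_scope.

Section EVS.
Variables (K : fieldType) (X : Type).
Variables (le : X -> X -> Prop) (add : X -> X -> X) (smul : K -> X -> X) (theta : X).

Definition primitive (z : X) : Prop := forall y : X, y <> z -> ~ le y z.

Record is_evs : Prop := IsEvs {
  evs_refl : forall x, le x x;
  evs_antisym : forall x y, le x y -> le y x -> x = y;
  evs_trans : forall x y z, le x y -> le y z -> le x z;
  evs_addA : forall x y z, add x (add y z) = add (add x y) z;
  evs_addC : forall x y, add x y = add y x;
  evs_add0 : forall x, add x theta = x;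
  evs_le_add : forall x y z, le x y -> le (add x z) (add y z);
  evs_le_smul : forall x y (a : K), le x y -> le (smul a x) (smul a y);
  evs_smulD : forall (a : K) x y, smul a (add x y) = add (smul a x) (smul a y);
  evs_smulA : forall (a b : K) x, smul a (smul b x) = smul (a * b) x;
  evs_smul_addle : forall (a b : K) x, le (smul (a + b) x) (add (smul a x) (smul b x));
  evs_smul1 : forall x, smul 1 x = x;
  evs_smul_eq0 : forall (a : K) x, smul a x = theta <-> (a = 0 \/ x = theta);
  evs_prim : forall x, add x (smul (-1) x) = theta <-> primitive x;
  evs_below_prim : forall x, exists2 p, primitive p & le p x
}.

Definition Lset (x : X) (z : X) : Prop :=
  exists (a : K) (p : X), a <> 0 /\ primitive p /\ le (add (smul a x) p) z.

Definition generates (B : X -> Prop) : Prop :=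
  (forall b, B b -> ~ primitive b) /\
  (forall z, ~ primitive z -> exists2 b, B b & Lset b z).

Definition orderly_dependent (x y : X) : Prop := Lset y x \/ Lset x y.

Definition orderly_independent_set (B : X -> Prop) : Prop :=
  (forall b, B b -> ~ primitive b) /\
  (forall x y, B x -> B y -> x <> y -> ~ orderly_dependent x y).

Definition is_basis (B : X -> Prop) : Prop :=
  orderly_independent_set B /\ generates B.

End EVS.

From mathcomp Require Import all_boot all_algebra.
From Stdlib Require Import Classical.
Import GRing.Theory.
Local Open Scope ring_scope.

(* Since X_0 is closed under sums and scalar multiples, the relation
   "y ∈ L(x)" is a preorder, and an orderly independent set is exactly a set
   on which this preorder is discrete.  For a ∈ A pick b ∈ B with a ∈ L(b) and
   then a' ∈ A with b ∈ L(a'); transitivity gives a ∈ L(a'), so a' = a, and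
   L(a) = L(b) follows from a ∈ L(b), b ∈ L(a).  If also L(a) = L(b') with
   b' ∈ B, then b ∈ L(b) = L(b'), whence b = b'. *)

Set Implicit Arguments.

Section LPreorder.
Variables (K : fieldType) (X : Type) (le : X -> X -> Prop)
  (add : X -> X -> X) (smul : K -> X -> X) (theta : X).
Hypothesis Hevs : is_evs le add smul theta.

Local Notation primitive := (primitive le).
Local Notation L := (Lset le add smul).

Lemma smul_theta (a : K) : smul a theta = theta.
Proof. by apply/(evs_smul_eq0 Hevs); right. Qed.

Lemma primitive_theta : primitive theta.
Proof. by apply/(evs_prim Hevs); rewrite smul_theta (evs_add0 Hevs). Qed.

Lemma primitive_smul (a : K) p : primitive p -> primitive (smul a p).
Proof.
move=> /(evs_prim Hevs) Hp; apply/(evs_prim Hevs).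
rewrite (evs_smulA Hevs) mulrC -(evs_smulA Hevs) -(evs_smulD Hevs) Hp.
exact: smul_theta.
Qed.

Lemma primitive_add p q : primitive p -> primitive q -> primitive (add p q).
Proof.
move=> /(evs_prim Hevs) Hp /(evs_prim Hevs) Hq; apply/(evs_prim Hevs).
rewrite (evs_smulD Hevs).
set p' := smul (-1) p; set q' := smul (-1) q.
have -> : add (add p q) (add p' q') = add (add p p') (add q q').
  rewrite (evs_addA Hevs) -(evs_addA Hevs p q p') (evs_addC Hevs q p').
  by rewrite (evs_addA Hevs p p' q) -(evs_addA Hevs _ q q').
by rewrite Hp Hq (evs_add0 Hevs).
Qed.

Lemma Lset_refl x : L x x.
Proof.
exists 1, theta; split; first exact/eqP/oner_neq0.
split; first exact: primitive_theta.
by rewrite (evs_add0 Hevs) (evs_smul1 Hevs); apply: (evs_refl Hevs).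
Qed.

Lemma Lset_trans x y z : L x y -> L y z -> L x z.
Proof.
move=> [a [p [a_neq0 [Pp le_y]]]] [b [q [b_neq0 [Pq le_z]]]].
exists (b * a), (add (smul b p) q); split; first by apply/eqP; rewrite mulf_neq0 //; apply/eqP.
split; first exact/primitive_add/Pq/primitive_smul.
apply: (evs_trans Hevs) le_z.
rewrite (evs_addA Hevs) -(evs_smulA Hevs) -(evs_smulD Hevs).
exact/(evs_le_add Hevs)/(evs_le_smul Hevs).
Qed.

Lemma Lset_eq_mutual x y : L x y -> L y x -> forall z, L x z <-> L y z.
Proof. by move=> Lxy Lyx z; split; apply: Lset_trans. Qed.

Lemma indep_Lset_eq (S : X -> Prop) x y :
  orderly_independent_set le add smul S -> S x -> S y -> L x y -> x = y.
Proof.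
move=> [_ indS] Sx Sy Lxy; apply: NNPP => x_neq_y.
by apply: (indS x y Sx Sy x_neq_y); right.
Qed.

Lemma basis_Lset_exists (A B : X -> Prop) a :
  is_basis le add smul A -> is_basis le add smul B -> A a ->
  exists2 b, B b & forall z, L a z <-> L b z.
Proof.
move=> [indA [_ genA]] [[primB _] [_ genB]] Aa.
have [b Bb Lba] := genB a (indA.1 a Aa).
have [a' Aa' La'b] := genA b (primB b Bb).
have a'_eq_a : a' = a by apply: (indep_Lset_eq indA) => //; apply: Lset_trans Lba.
by exists b => //; apply: Lset_eq_mutual; rewrite // -a'_eq_a.
Qed.

Lemma basis_Lset_unique (B : X -> Prop) b b' :
  is_basis le add smul B -> B b -> B b' ->
  (forall z, L b z <-> L b' z) -> b' = b.
Proof.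
move=> [indB _] Bb Bb' Eb; apply: (indep_Lset_eq indB) => //.
exact/Eb/Lset_refl.
Qed.

End LPreorder.

Unset Implicit Arguments.

Theorem mainTheorem16 (K : fieldType) (X : Type) (le : X -> X -> Prop)
  (add : X -> X -> X) (smul : K -> X -> X) (theta : X)
  (Hevs : is_evs le add smul theta)
  (A B : X -> Prop)
  (HA : is_basis le add smul A) (HB : is_basis le add smul B) :
  forall a, A a ->
    exists b, B b /\ (forall z, Lset le add smul a z <-> Lset le add smul b z) /\
      (forall b', B b' -> (forall z, Lset le add smul a z <-> Lset le add smul b' z) -> b' = b).
Proof.
move=> a Aa.
have [b Bb Eab] := basis_Lset_exists Hevs a HA HB Aa.
exists b; split=> //; split=> // b' Bb' Eab'.
apply: (basis_Lset_unique Hevs HB Bb Bb') => z.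
by rewrite -Eab.
Qed.
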